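(* Let $F$ be a non-vanishing, proper subfunctor of the identity functor on the category of abelian groups. Then the essential image of $F$ contains either a non-trivial finite cyclic group or the $p$-quasicyclic group $\mathbb{Z}(p^\infty)$ for some prime $p$.
   Context: A subfunctor $F$ of the identity functor on abelian groups assigns to each abelian group $A$ a subgroup $F(A)\subseteq A$ with $f(F(A))\subseteq F(A')$ for every homomorphism $f:A\to A'$. Non-vanishing means $F(A)\neq 0$ for some $A$; proper means $F(A)\neq A$ for some $A$. $\mathbb{Z}(p^\infty)=\mathbb{Z}[1/p]/\mathbb{Z}$. The essential image of $F$ is the class of groups isomorphic to $F(A)$ for some $A$. *)

From HB Require Import structures.
From mathcomp Require Import all_boot all_order all_algebra.
Unset Printing Implicit Defensive.
Import Order.TTheory GRing.Theory Num.Theory.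
Local Open Scope ring_scope.

Record subfunctor := SubFunctor {
  sf_fun :> forall A : zmodType, A -> Prop;
  sf_0 : forall A : zmodType, sf_fun A 0;
  sf_sub : forall (A : zmodType) (x y : A),
      sf_fun A x -> sf_fun A y -> sf_fun A (x - y);
  sf_nat : forall (A B : zmodType) (f : {additive A -> B}) (x : A),
      sf_fun A x -> sf_fun B (f x)
}.

Definition non_vanishing (F : subfunctor) : Prop :=
  exists (A : zmodType) (x : A), F A x /\ x <> 0.

Definition proper_sf (F : subfunctor) : Prop :=
  exists (A : zmodType) (x : A), ~ F A x.

Definition iso_to_sub (G A : zmodType) (S : A -> Prop) : Prop :=
  exists f : {additive G -> A},
    injective f /\ forall y : A, S y <-> exists g : G, f g = y.

Definition in_ess_image (F : subfunctor) (G : zmodType) : Prop :=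
  exists A : zmodType, iso_to_sub G A (F A).

(* Z[1/p] as a subset of the rationals, and the integers inside it. *)
Definition in_Zinvp (p : nat) (q : rat) : Prop :=
  exists k : nat, (denq q %| (p ^ k)%:Z)%Z.
Definition in_Z (q : rat) : Prop := denq q = 1.

(* The subgroup S of A is isomorphic to Z(p^oo) = Z[1/p]/Z: there is a
   homomorphism phi : Z[1/p] -> A with kernel exactly Z and image exactly S
   (first isomorphism theorem). *)
Definition iso_to_sub_Zpinf (p : nat) (A : zmodType) (S : A -> Prop) : Prop :=
  exists phi : rat -> A,
    (forall x y, in_Zinvp p x -> in_Zinvp p y -> phi (x + y) = phi x + phi y) /\
    (forall x, in_Zinvp p x -> (phi x = 0 <-> in_Z x)) /\
    (forall y : A, S y <-> exists2 x, in_Zinvp p x & phi x = y).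

Definition Zpinf_in_ess_image (F : subfunctor) (p : nat) : Prop :=
  exists A : zmodType, iso_to_sub_Zpinf p A (F A).

From HB Require Import structures.
From mathcomp Require Import all_boot all_order all_algebra.
From mathcomp Require Import ring generic_quotient ring_quotient boolp classical_sets.
Import Order.TTheory GRing.Theory Num.Theory.
Local Open Scope ring_scope.
Local Open Scope quotient_scope.
Set Implicit Arguments. Unset Strict Implicit. Unset Printing Implicit Defensive.

(* Take x <> 0 in F A and a prime p dividing the order of x (any prime if x
   has infinite order).  Z(p^oo) is divisible, hence injective, so k x |-> k/p
   extends to a homomorphism A -> Z(p^oo); naturality puts 1/p in F(Z(p^oo)).
   A subgroup of Z(p^oo) containing 1/p is either everything or the cyclic
   group generated by 1/p^j for some j >= 1, which is isomorphic to Z/p^j. *)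

Definition subgroup (V : zmodType) (S : V -> Prop) :=
  S 0 /\ forall u v, S u -> S v -> S (u - v).

Section Subgroup.
Variables (V : zmodType) (S : V -> Prop).
Hypothesis sgS : subgroup S.

Lemma subgroup0 : S 0. Proof. by case: sgS. Qed.

Lemma subgroupB u v : S u -> S v -> S (u - v). Proof. by case: sgS => _; apply. Qed.

Lemma subgroupN u : S u -> S (- u).
Proof. by move=> Su; rewrite -sub0r; apply: subgroupB => //; apply: subgroup0. Qed.

Lemma subgroupD u v : S u -> S v -> S (u + v).
Proof. by move=> Su Sv; rewrite -[v]opprK; apply/subgroupB/subgroupN. Qed.

Lemma subgroupMn u n : S u -> S (u *+ n).
Proof.
move=> Su; elim: n => [|n IH]; first by rewrite mulr0n; apply: subgroup0.
by rewrite mulrS; apply: subgroupD.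
Qed.

Lemma subgroupMz u k : S u -> S (u *~ k).
Proof.
by move=> Su; case: k => n; rewrite ?NegzE ?mulrNz; [|apply: subgroupN]; apply: subgroupMn.
Qed.

End Subgroup.

Lemma sf_subgroup (F : subfunctor) (A : zmodType) : subgroup (F A).
Proof. by split; [apply: sf_0 | apply: sf_sub]. Qed.

Lemma subgroup_int_dvd (I : int -> Prop) : subgroup I ->
  exists m : nat, forall k, I k <-> (m %| k)%Z.
Proof.
move=> sgI.
have Iabs k : I k -> I `|k|%:Z.
  by move=> Ik; rewrite abszE; case: ger0P => _ //; apply: subgroupN.
have [[n [n_gt0 In]] | no_pos] := pselect (exists n : nat, (0 < n)%N /\ I n).
  have exP : exists n, `[< (0 < n)%N /\ I n >] by exists n; apply/asboolP.
  case: (ex_minnP exP) => m /asboolP [m_gt0 Im] m_min.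
  exists m => k; split=> [Ik | /dvdzP [q ->]]; last first.
    by rewrite mulrC -mulrzz; apply: subgroupMz.
  apply/dvdz_mod0P/eqP/contraT => r_neq0.
  have Ir : I (k %% m)%Z.
    have -> : (k %% m)%Z = k - (k %/ m)%Z * m by rewrite {2}(divz_eq k m); ring.
    by apply: (subgroupB sgI) => //; rewrite mulrC -mulrzz; apply: subgroupMz.
  have /m_min : `[< (0 < `|(k %% m)%Z|)%N /\ I `|(k %% m)%Z|%N >].
    by apply/asboolP; split; [rewrite absz_gt0 | apply: Iabs].
  by rewrite leqNgt -ltz_nat gez0_abs ?modz_ge0 ?ltz_pmod // -lt0n.
exists 0%N => k; rewrite dvd0z; split=> [Ik | /eqP ->]; last exact: subgroup0.
apply: contraPT no_pos => k_neq0; apply; exists `|k|%N.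
by split; [rewrite absz_gt0 | apply: Iabs].
Qed.

Lemma prime_dvd_annihilator (V : zmodType) (x : V) :
  x <> 0 -> exists2 p, prime p & forall k : int, x *~ k = 0 -> (p %| k)%Z.
Proof.
move=> x_neq0; have sg_ann : subgroup (fun k : int => x *~ k = 0).
  by split=> [|k l xk xl]; rewrite ?mulr0z // mulrzBr xk xl subrr.
have [m ann_m] := subgroup_int_dvd sg_ann.
have [m0 | m_gt0] := posnP m.
  by exists 2%N => // k /ann_m; rewrite m0 dvd0z => /eqP ->; rewrite dvdz0.
have m_gt1 : (1 < m)%N.
  rewrite ltn_neqAle m_gt0 andbT; apply: contra_notN x_neq0 => /eqP m1.
  by rewrite -[x]mulr1z; apply/ann_m; rewrite -m1 dvdzz.
exists (pdiv m); first exact: pdiv_prime.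
by move=> k /ann_m; apply: dvdz_trans; rewrite dvdzE pdiv_dvd.
Qed.

Lemma pairMzE (U V : zmodType) (a : U) (b : V) k : (a, b) *~ k = (a *~ k, b *~ k).
Proof. by case: k => n; rewrite ?NegzE ?mulrNz -!pmulrn pairMnE. Qed.

Definition partial_hom_graph (U V : zmodType) (G : U * V -> Prop) :=
  subgroup G /\ forall d, G (0, d) -> d = 0.

Lemma partial_hom_graph_fun (U V : zmodType) (G : U * V -> Prop) a d e :
  partial_hom_graph G -> G (a, d) -> G (a, e) -> d = e.
Proof.
case=> sgG G0 Gd Ge; apply/eqP; rewrite -subr_eq0; apply/eqP/G0.
by rewrite -(subrr a); apply: (subgroupB sgG Gd Ge).
Qed.

Lemma subgroup_fst (U V : zmodType) (G : U * V -> Prop) :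
  subgroup G -> subgroup (fun a => exists d, G (a, d)).
Proof.
move=> sgG; split; first by exists 0; apply: (subgroup0 sgG).
by move=> a b [d Gad] [e Gbe]; exists (d - e); apply: (subgroupB sgG Gad Gbe).
Qed.

Definition adjoin (V : zmodType) (S : V -> Prop) (u : V) : V -> Prop :=
  fun v => exists2 s, S s & exists k, v = s + u *~ k.

Lemma subgroup_adjoin (V : zmodType) (S : V -> Prop) u :
  subgroup S -> subgroup (adjoin S u).
Proof.
move=> sgS; split; first by exists 0; [apply: subgroup0 | exists 0; rewrite addr0].
move=> _ _ [s Ss [k ->]] [r Sr [l ->]]; exists (s - r); first exact: subgroupB.
by exists (k - l); rewrite mulrzBr opprD addrACA.
Qed.

Lemma sub_adjoin (V : zmodType) (S : V -> Prop) u : (S `<=` adjoin S u)%classic.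
Proof. by move=> s Ss; exists s => //; exists 0; rewrite addr0. Qed.

(* The empty set is admitted so that Zorn_bigcup, which also takes the union
   of the empty chain, applies. *)
Definition partial_hom_graph_or_empty (U V : zmodType) (B G : U * V -> Prop) :=
  G = set0 \/ partial_hom_graph G /\ (B `<=` G)%classic.

Lemma partial_hom_graph_or_empty_bigcup (U V : zmodType) (B : U * V -> Prop)
    (C : set (set (U * V))) :
  (C `<=` partial_hom_graph_or_empty B)%classic -> total_on C subset ->
  partial_hom_graph_or_empty B (\bigcup_(G in C) G)%classic.
Proof.
move=> CP Ctot.
have pgC G w : C G -> G w -> partial_hom_graph G /\ (B `<=` G)%classic.
  by move=> CG Gw; case: (CP G CG) => // G0; rewrite G0 in Gw.
have [[w [G CG Gw]] | empty] := pselect (exists w, (\bigcup_(G in C) G)%classic w); last first.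
  by left; apply/seteqP; split=> // w Uw; apply: empty; exists w.
have [[[G0 _] _] BG] := pgC G w CG Gw.
right; split; last by move=> v /BG Gv; exists G.
split; [split; first by exists G|].
- move=> u v [X CX Xu] [Y CY Yv].
  have [XY | YX] := Ctot X Y CX CY.
    by exists Y => //; apply: (subgroupB (pgC Y v CY Yv).1.1) => //; apply: XY.
  by exists X => //; apply: (subgroupB (pgC X u CX Xu).1.1) => //; apply: YX.
- by move=> d [X CX Xd]; apply: (pgC X _ CX Xd).1.2.
Qed.

Section DivisibleGroup.
Variable D : zmodType.
Hypothesis divD : forall (d : D) (n : nat), (0 < n)%N -> exists t : D, t *+ n = d.

Lemma divisible_int_ext (G : int * D -> Prop) :
  partial_hom_graph G -> exists t, forall k d, G (k, d) -> d = t *~ k.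
Proof.
move=> pG; have [sgG _] := pG.
have [m domG] := subgroup_int_dvd (subgroup_fst sgG).
have [m0 | m_gt0] := posnP m.
  exists 0 => k d Gkd; have /domG : exists d, G (k, d) by exists d.
  rewrite m0 dvd0z mul0rz => /eqP k0; rewrite k0 in Gkd.
  exact: pG.2.
have [dm Gm] : exists dm, G (m%:Z, dm) by apply/domG.
have [t tm] := divD dm m_gt0.
exists t => k d Gkd; have /domG /dvdzP [j kE] : exists d, G (k, d) by exists d.
have Gmj : G (k, dm *~ j).
  by have := subgroupMz sgG j Gm; rewrite pairMzE kE mulrC -mulrzz.
by rewrite (partial_hom_graph_fun pG Gkd Gmj) kE -tm pmulrn -mulrzA mulrC.
Qed.

Variable A : zmodType.

Lemma partial_hom_graph_extend (G : A * D -> Prop) (a : A) :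
  partial_hom_graph G -> exists t, partial_hom_graph (adjoin G (a, t)).
Proof.
move=> [sgG G0]; pose H (kd : int * D) := G (a *~ kd.1, kd.2).
have pH : partial_hom_graph H.
  split; last by move=> d; rewrite /H /= mulr0z; apply: G0.
  split; first by rewrite /H /= mulr0z; apply: (subgroup0 sgG).
  by move=> [k d] [l e] Hkd Hle; rewrite /H /= mulrzBr; apply: (subgroupB sgG Hkd Hle).
have [t Ht] := divisible_int_ext pH.
exists t; split; first exact: subgroup_adjoin.
move=> d [g Gg [k gE]].
have Hk : H (k, t *~ k - d).
  rewrite /H /=; have -> : (a *~ k, t *~ k - d) = - g.
    by rewrite -[g](addrK ((a, t) *~ k)) -gE pairMzE opprB; congr pair; rewrite /= oppr0 addr0.
  exact: subgroupN.
by have := Ht _ _ Hk; rewrite -{2}[t *~ k]subr0 => /addrI /oppr_inj.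
Qed.

Lemma divisible_hom_ext (x : A) (y : D) :
  (forall k : int, x *~ k = 0 -> y *~ k = 0) ->
  exists f : {additive A -> D}, f x = y.
Proof.
move=> ann_xy; pose B := adjoin (fun u => u = 0) (x, y).
have pB : partial_hom_graph B.
  split; first by apply: subgroup_adjoin; split=> [|u v -> ->]; rewrite ?subr0.
  by move=> d [_ -> [k]]; rewrite add0r pairMzE => -[/esym/ann_xy ? ->].
have [M [[M0 | [pM BM]] Mmax]] := Zorn_bigcup (@partial_hom_graph_or_empty_bigcup _ _ B).
  exfalso; apply: (Mmax B); last by right; split.
  rewrite M0; split=> // /(_ 0); apply; exact: pB.1.1.
have Mtotal a : exists d, M (a, d).
  have [t pMt] := partial_hom_graph_extend a pM.
  apply: contrapT => Ma; apply: (Mmax (adjoin M (a, t))).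
    split; first exact: sub_adjoin.
    move=> /(_ (a, t)) Mat; apply: Ma; exists t; apply: Mat.
    by exists 0; first exact: pM.1.1; exists 1; rewrite add0r mulr1z.
  by right; split=> // u /BM; apply: sub_adjoin.
pose f a := projT1 (cid (Mtotal a)).
have Mf a : M (a, f a) by rewrite /f; case: cid.
have f_morph : zmod_morphism f.
  move=> a b; apply: (partial_hom_graph_fun pM (Mf _)).
  exact: (subgroupB pM.1 (Mf a) (Mf b)).
pose fA : {additive A -> D} := HB.pack f (GRing.isZmodMorphism.Build A D f f_morph).
exists fA; apply: (partial_hom_graph_fun pM (Mf x)); apply: BM.
by exists 0; [|exists 1; rewrite add0r mulr1z].
Qed.

End DivisibleGroup.

Lemma iso_to_sub_Zp (V : zmodType) (e : V) (N : nat) (S : V -> Prop) :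
  (1 < N)%N -> (forall k : int, (e *~ k == 0) = (N %| k)%Z) ->
  (forall y, S y <-> exists k : int, y = e *~ k) ->
  iso_to_sub [the zmodType of 'Z_N] V S.
Proof.
move=> N_gt1 e_ord S_cyc; have N_eq := Zp_cast N_gt1.
have e_modz k : e *~ (k %% N)%Z = e *~ k.
  apply/eqP; rewrite -subr_eq0 -mulrzBr e_ord -eqz_mod_dvd.
  by rewrite modz_mod.
have e_modn k : e *+ (k %% (Zp_trunc N).+2) = e *+ k.
  by rewrite N_eq !pmulrn -modz_nat e_modz.
pose f (i : 'Z_N) := e *+ val i.
have f_morph : zmod_morphism f.
  move=> i j; have j_le : (val j <= (Zp_trunc N).+2)%N by apply/ltnW/ltn_ord.
  rewrite /f /= e_modn mulrnDr e_modn (mulrnBr e j_le).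
  by rewrite -[e *+ _.+2]e_modn modnn mulr0n sub0r.
pose fA : {additive 'Z_N -> V} := HB.pack f (GRing.isZmodMorphism.Build _ V f f_morph).
exists fA; split=> [i j /eqP | y].
  rewrite /= /f -subr_eq0 !pmulrn -mulrzBr e_ord -eqz_mod_dvd !modz_nat => /eqP.
  have ord_lt (k : 'Z_N) : (val k < N)%N by rewrite -[X in (_ < X)%N]N_eq; apply: ltn_ord.
  by case; rewrite !modn_small ?ord_lt // => /val_inj.
rewrite S_cyc; split=> [[k ->] | [i <-]]; last by exists (val i); rewrite /= /f pmulrn.
exists (inZp `|(k %% N)%Z|); rewrite /= /f e_modn pmulrn.
by rewrite gez0_abs ?modz_ge0 ?e_modz // -lt0n ltnW.
Qed.

Lemma denq_frac_dvd (n d : int) : d != 0 -> (denq (n%:~R / d%:~R) %| d)%Z.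
Proof. by case: divqP => // k q _ _; apply/dvdz_mull/dvdzz. Qed.

(* Z(p^oo) is modelled as Q / Z_(p), Z_(p) the rationals whose denominator is
   prime to p, rather than as Z[1/p] / Z: as a quotient of Q it is divisible. *)
Definition Zloc (p : nat) : {pred rat} := fun q => coprime p `|denq q|.

Lemma Zloc_frac p (n d : int) : coprime p `|d| -> n%:~R / d%:~R \in Zloc p.
Proof.
move=> p_d; have [-> | d0] := eqVneq d 0.
  by rewrite invr0 mulr0 unfold_in /Zloc /= coprimen1.
by rewrite unfold_in /Zloc; apply: coprime_dvdr p_d; apply: denq_frac_dvd.
Qed.

Lemma Zloc_int p (n : int) : n%:~R \in Zloc p.
Proof. by rewrite unfold_in /Zloc denq_int coprimen1. Qed.

Lemma Zloc_zmod_closed p : zmod_closed (Zloc p).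
Proof.
split=> [|q r]; first exact: (Zloc_int p 0).
rewrite !unfold_in /Zloc => p_q p_r.
have -> : q - r = (numq q * denq r - numq r * denq q)%:~R / (denq q * denq r)%:~R.
  rewrite -{1}(divq_num_den q) -{1}(divq_num_den r) intrM intrB !intrM.
  by field; rewrite !intr_eq0 !denq_neq0.
by apply: Zloc_frac; rewrite abszM coprimeMr p_q.
Qed.

HB.instance Definition _ (p : nat) :=
  GRing.isZmodClosed.Build rat (Zloc p) (Zloc_zmod_closed p).

Lemma quot_pi_eq0 (R : zmodType) (I : zmodClosed R) (x : R) :
  (\pi_(Quotient.quot I) x == 0) = (x \in I).
Proof.
by rewrite -[in RHS](subr0 x) Quotient.idealrBE -(raddf0 \pi_(Quotient.quot I)) piE.
Qed.

Definition Zpinf (p : nat) := Quotient.quot (Zloc p).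

Lemma Zpinf_divisible p (y : Zpinf p) n : (0 < n)%N -> exists t, t *+ n = y.
Proof.
move=> n_gt0; exists (\pi_(Zpinf p) (repr y / n%:R)).
rewrite -raddfMn -[_ *+ n]mulr_natr divfK ?pnatr_eq0 -?lt0n //; exact: reprK.
Qed.

Lemma Zloc_Zinvp p q : in_Zinvp p q -> (q \in Zloc p <-> in_Z q).
Proof.
move=> [k dvd_k]; rewrite unfold_in /Zloc /in_Z; split=> [p_q | ->]; last exact: coprimen1.
have /eqP : coprime `|denq q| (p ^ k) by rewrite coprime_sym coprimeXl.
by rewrite (gcdn_idPl dvd_k) => denq1; rewrite -absz_denq denq1.
Qed.

Section PrimeFractions.
Variables (p : nat) (p_prime : prime p).

Lemma pexpr_neq0 f : (p ^ f)%N%:R != 0 :> rat.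
Proof. by rewrite pnatr_eq0 -lt0n expn_gt0 prime_gt0. Qed.

Lemma Zloc_pfrac (a : int) f : (a%:~R / (p ^ f)%N%:R \in Zloc p) = ((p ^ f)%N %| a)%Z.
Proof.
apply/idP/idP => [| /dvdzP [b ->]]; last first.
  by rewrite intrM -pmulrn mulfK ?pexpr_neq0 // Zloc_int.
rewrite unfold_in /Zloc; set q := _ / _ => p_q.
have E : a * denq q = numq q * (p ^ f)%N%:Z.
  apply: (@intr_inj rat); rewrite !intrM numqE /q -pmulrn.
  by field; rewrite pexpr_neq0.
have : (p ^ f %| `|a| * `|denq q|)%N by rewrite -abszM E abszM dvdn_mull.
by rewrite Gauss_dvdl // coprimeXl.
Qed.

Lemma inv_mod_pexp (m : int) f : ~~ (p %| m)%Z -> exists u : int, ((p ^ f)%N %| u * m - 1)%Z.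
Proof.
move=> p_m; have /coprimezP [[u v] /= Euv] : coprimez m (p ^ f)%N.
  by rewrite coprimezE coprime_sym coprimeXl // prime_coprime.
by exists u; rewrite -Euv opprD addrA subrr add0r rpredN; apply/dvdz_mull/dvdzz.
Qed.

Lemma Zloc_pfrac_approx q :
  exists f (a : int), ~~ (p %| a)%Z /\ q - a%:~R / (p ^ f)%N%:R \in Zloc p.
Proof.
have d_gt0 : (0 < `|denq q|)%N by rewrite absz_gt0 denq_neq0.
have [m p_m dE] := pfactor_coprime p_prime d_gt0; set f := logn p _ in dE.
have q_frac : q = (numq q)%:~R / (m * p ^ f)%N%:R.
  by rewrite -dE -[LHS]divq_num_den -[denq q]gez0_abs ?denq_ge0.
have [f0 | f_gt0] := posnP f.
  exists 0%N, 1; split; first by rewrite dvdzE dvdn1 gtn_eqF ?prime_gt1.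
  rewrite expn0 divr1 rpredB ?(Zloc_int p 1) //.
  by rewrite q_frac f0 expn0 muln1; apply: (@Zloc_frac p _ m).
have p_n : ~~ (p %| numq q)%Z.
  rewrite dvdzE -prime_coprime //; have := coprime_num_den q.
  by rewrite coprime_sym; apply: coprime_dvdl; rewrite dE dvdn_mull // dvdn_exp.
have [u /dvdzP [w Ew]] : exists u : int, ((p ^ f)%N %| u * m - 1)%Z.
  by apply: inv_mod_pexp; rewrite dvdzE -prime_coprime.
exists f, (numq q * u); split.
  rewrite dvdzE abszM Euclid_dvdM // negb_or -dvdzE p_n /=; apply/negP => p_u.
  have : (p %| u * m - 1)%Z by rewrite Ew dvdz_mull // dvdzE dvdn_exp.
  by rewrite rpredBl ?dvdz_mulr // dvdzE dvdn1 gtn_eqF ?prime_gt1.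
have m_neq0 : m%:R != 0 :> rat.
  by rewrite pnatr_eq0; apply: contraTneq d_gt0 => m0; rewrite dE m0.
have u_frac : u%:~R = (1 + w%:~R * (p ^ f)%N%:R) / m%:R :> rat.
  apply: (mulIf m_neq0); rewrite divfK // -[m%:R]/(m%:~R) -!intrM.
  by rewrite -(subrK 1 (u * m)) Ew intrD intrM -pmulrn addrC.
have -> : q - (numq q * u)%:~R / (p ^ f)%N%:R = (- numq q * w)%:~R / m%:R.
  rewrite {1}q_frac !intrM u_frac natrM intrN.
  by field; rewrite m_neq0 pexpr_neq0.
by apply: (@Zloc_frac p _ m).
Qed.

Lemma in_Zinvp_pfrac (a : int) f : in_Zinvp p (a%:~R / (p ^ f)%N%:R).
Proof.
exists f; have := @denq_frac_dvd a (p ^ f)%N; rewrite -pmulrn; apply.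
by rewrite -lt0n expn_gt0 prime_gt0.
Qed.

End PrimeFractions.

Section Quasicyclic.
Variables (p : nat) (p_prime : prime p).

Definition pinv f : Zpinf p := \pi_(Zpinf p) ((p ^ f)%N%:R)^-1.

Lemma pinvMz a f : pinv f *~ a = \pi_(Zpinf p) (a%:~R / (p ^ f)%N%:R).
Proof. by rewrite -raddfMz mulrzl. Qed.

Lemma pinvMz_eq0 a f : (pinv f *~ a == 0) = ((p ^ f)%N %| a)%Z.
Proof. by rewrite pinvMz quot_pi_eq0 Zloc_pfrac. Qed.

Lemma pinv_expn f g : pinv f = pinv (f + g) *~ (p ^ g)%N.
Proof.
rewrite pinvMz -pmulrn expnD natrM invfM mulrCA divff ?mulr1 //.
by rewrite pnatr_eq0 -lt0n expn_gt0 prime_gt0.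
Qed.

Lemma Zpinf_normal_form (y : Zpinf p) : exists f (a : int), ~~ (p %| a)%Z /\ y = pinv f *~ a.
Proof.
have [f [a [p_a Ea]]] := Zloc_pfrac_approx p_prime (repr y).
exists f, a; split=> //; rewrite pinvMz -[y]reprK; apply/eqP; rewrite -subr_eq0 -raddfB.
by rewrite quot_pi_eq0.
Qed.

Lemma pinvMzK_coprime a f : ~~ (p %| a)%Z -> exists u : int, pinv f *~ a *~ u = pinv f.
Proof.
move=> p_a; have [u dvd_u] := inv_mod_pexp p_prime f p_a.
exists u; apply/eqP; rewrite -subr_eq0 -mulrzA mulrC -[X in _ - X]mulr1z -mulrzBr.
by rewrite pinvMz_eq0.
Qed.

Lemma Zpinf_subgroup_cases (S : Zpinf p -> Prop) : subgroup S -> S (pinv 1) ->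
  (forall y, S y) \/
  exists2 j, (0 < j)%N & forall y, S y <-> exists k : int, y = pinv j *~ k.
Proof.
move=> sgS S1.
have S_coprime f a : ~~ (p %| a)%Z -> S (pinv f *~ a) -> S (pinv f).
  by move=> p_a Sa; have [u <-] := pinvMzK_coprime f p_a; apply: subgroupMz.
have S_le f g : (g <= f)%N -> S (pinv f) -> S (pinv g).
  by move=> le_gf Sf; rewrite (pinv_expn g (f - g)) subnKC //; apply: subgroupMz.
have [allS | ] := pselect (forall f, S (pinv f)).
  by left=> y; have [f [a [_ ->]]] := Zpinf_normal_form y; apply: subgroupMz.
move=> /existsNP [f0 not_Sf0]; right.
have bounded f : `[< S (pinv f) >] -> (f <= f0)%N.
  move=> /asboolP Sf; apply: contrapT => /negP; rewrite -ltnNge => /ltnW le_f0f.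
  exact/not_Sf0/(S_le _ _ le_f0f).
have [j /asboolP Sj j_max] := ex_maxnP (ex_intro _ 1%N (asboolT S1)) bounded.
exists j; first exact/j_max/asboolP.
move=> y; split=> [Sy | [k ->]]; last exact: subgroupMz.
have [f [a [p_a Ey]]] := Zpinf_normal_form y.
have /j_max le_fj : `[< S (pinv f) >] by apply/asboolP/(S_coprime f a p_a); rewrite -Ey.
by exists ((p ^ (j - f))%N%:Z * a); rewrite Ey (pinv_expn f (j - f)) subnKC // mulrzA.
Qed.

End Quasicyclic.

Lemma iso_to_sub_Zpinf_setT p (S : Zpinf p -> Prop) :
  prime p -> (forall y, S y) -> iso_to_sub_Zpinf p (Zpinf p) S.
Proof.
move=> p_prime allS; exists \pi_(Zpinf p); split; [|split].
- by move=> q r _ _; rewrite raddfD.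
- by move=> q /Zloc_Zinvp <-; split=> [/eqP | ?]; [|apply/eqP]; rewrite quot_pi_eq0.
- move=> y; split=> // _; have [f [a [_ ->]]] := Zpinf_normal_form p_prime y.
  by exists (a%:~R / (p ^ f)%N%:R); [apply: in_Zinvp_pfrac | rewrite pinvMz].
Qed.

Theorem theorem3p17 (F : subfunctor) :
  non_vanishing F -> proper_sf F ->
  (exists n : nat, (1 < n)%N /\ in_ess_image F [the zmodType of 'Z_n]) \/
  (exists p : nat, prime p /\ Zpinf_in_ess_image F p).
Proof.
move=> [A [x [Fx x_neq0]]] _.
have [p p_prime ann_x] := prime_dvd_annihilator x_neq0.
have [g gx] : exists g : {additive A -> Zpinf p}, g x = pinv p 1.
  apply: (divisible_hom_ext (@Zpinf_divisible p)) => k /ann_x p_k.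
  by apply/eqP; rewrite pinvMz_eq0.
have F1 : F (Zpinf p) (pinv p 1) by rewrite -gx; apply: sf_nat.
have [allF | [j j_gt0 Fj]] := Zpinf_subgroup_cases p_prime (sf_subgroup F _) F1.
  by right; exists p; split=> //; exists (Zpinf p); apply: iso_to_sub_Zpinf_setT.
have pj_gt1 : (1 < p ^ j)%N by rewrite -(expn0 p) ltn_exp2l ?prime_gt1.
left; exists (p ^ j)%N; split=> //.
by exists (Zpinf p); apply: iso_to_sub_Zp Fj => // k; rewrite pinvMz_eq0.
Qed.
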